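(* Let $\mathscr{S}\subseteq\mathbb{R}$. For each $s\in\mathscr{S}$ let $\{\mathcal{V}(s,t),\ t\in\mathbb{R}^+\}$ be a real-valued stochastic process. Let $\{X_t,\ t\in\mathbb{R}^+\}$ be a real-valued stochastic process with $X_0=0$. For each $s\in\mathscr{S}$ let $\{\mathcal{Z}(s,t),\ t\in\mathbb{R}^+\}$ be a right-continuous supermartingale adapted to the natural filtration generated by $\{\mathcal{V}(s,t),\ t\in\mathbb{R}^+\}$ and $\{X_t,\ t\in\mathbb{R}^+\}$, such that for all $s\in\mathscr{S}$, \[ \mathbb{E}[\mathcal{Z}(s,0)]\le 1\quad\text{and}\quad \exp(sX_t-\mathcal{V}(s,t))\le\mathcal{Z}(s,t)\ \text{ almost surely for all } t\in\mathbb{R}^+. \] Let $\gamma\in\mathbb{R}$ and let $g$ be a real-valued function on $\mathscr{S}$. Then \[ \Pr\Big\{\sup_{t>0}\big[s(X_t-\gamma)-\mathcal{V}(s,t)+g(s)\big]\ge 0\Big\}\le\exp(g(s)-\gamma s)\quad\text{for all } s\in\mathscr{S}. \] In particular: (I) If the infimum of $g(s)-\gamma s$ over $s\in\mathscr{S}$ is attained at $\zeta\in\mathscr{S}$, then $\Pr\{\sup_{t>0}[\zeta(X_t-\gamma)-\mathcal{V}(\zeta,t)+g(\zeta)]\ge0\}\le\exp(g(\zeta)-\gamma\zeta)$. (II) If $\mathcal{V}(s,t)$ is a deterministic function of $s\in\mathscr{S}$ and $t\in\mathbb{R}^+$, then $\Pr\{\sup_{t>0}[s(X_t-\gamma)-\mathcal{V}(s,t)+\mathcal{V}(s,\tau)]\ge0\}\le\exp(\mathcal{V}(s,\tau)-\gamma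 s)$ for all $s\in\mathscr{S}$ and $\tau\in\mathbb{R}^+$. (III) If $\mathcal{V}(s,t)=\varphi(s)V_t+\ln C$, where $C>0$ is a constant, $\varphi$ is a deterministic function on $\mathscr{S}$, and $\{V_t,\ t\in\mathbb{R}^+\}$ is a deterministic or stochastic process, then $\Pr\{\sup_{t>0}[s(X_t-\gamma)-\varphi(s)(V_t-m)]\ge0\}\le C\exp(m\varphi(s)-\gamma s)$ for all $s\in\mathscr{S}$ and $m\in\mathbb{R}$.
   Context: $\mathbb{R}^+$ denotes the set of nonnegative real numbers. *)

From HB Require Import structures.
From mathcomp Require Import all_boot all_order all_algebra.
From mathcomp Require Import all_classical all_reals all_analysis.
Set Implicit Arguments. Unset Strict Implicit. Unset Printing Implicit Defensive.
Import Order.TTheory GRing.Theory Num.Theory.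
Import numFieldNormedType.Exports.
Local Open Scope classical_set_scope.
Local Open Scope ring_scope.

(* Time index R^+ is represented by t : R with 0 <= t; processes are
   functions R -> T -> R (time first, then sample point). *)

Section Defs.
Context (d : measure_display) (T : measurableType d) (R : realType).

Definition natural_filtration (Y X : R -> T -> R) (t : R) : set (set T) :=
  <<s [set A | exists u, (0 <= u <= t) /\ exists B : set R, measurable B /\
          (A = Y u @^-1` B \/ A = X u @^-1` B)] >>.

Definition adapted (F : R -> set (set T)) (Z : R -> T -> R) : Prop :=
  forall t, 0 <= t -> forall B : set R, measurable B -> F t (Z t @^-1` B).

(* Supermartingale w.r.t. F under P (conditional expectation is not in the
   library; we use its defining property: for u <= t and A in F_u,
   E[Z_t 1_A] <= E[Z_u 1_A]). *)
Definition supermartingale (P : probability T R) (F : R -> set (set T))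
    (Z : R -> T -> R) : Prop :=
  adapted F Z /\
  (forall t, 0 <= t -> P.-integrable setT (fun x => (Z t x)%:E)) /\
  (forall u t, 0 <= u -> u <= t -> forall A, F u A ->
     (\int[P]_(x in A) (Z t x)%:E <= \int[P]_(x in A) (Z u x)%:E)%E).

Definition right_continuous_paths (Z : R -> T -> R) : Prop :=
  forall x t, 0 <= t -> (fun u => Z u x) @ t^'+ --> Z t x.

Definition sup_event (f : R -> T -> R) : set T :=
  [set x | (0 <= ereal_sup [set (f t x)%:E | t in [set t : R | (0 < t)%R]])%E].

(* "Pr(E) <= b", for a possibly non-measurable event E: E is contained in a
   measurable event of probability at most b (outer probability bound). *)
Definition prob_le (P : probability T R) (E : set T) (b : R) : Prop :=
  exists M, measurable M /\ E `<=` M /\ (P M <= b%:E)%E.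

End Defs.

From HB Require Import structures.
From mathcomp Require Import all_boot all_order all_algebra.
From mathcomp Require Import all_classical all_reals all_analysis.
From mathcomp Require Import measurable_realfun lra ring.
Set Implicit Arguments. Unset Strict Implicit. Unset Printing Implicit Defensive.
Import Order.TTheory GRing.Theory Num.Theory.
Import numFieldNormedType.Exports.
Local Open Scope classical_set_scope.
Local Open Scope ring_scope.

(* Everything rests on Ville's maximal inequality for the nonnegative
   supermartingale Z(s,.): wherever exp(s X_t - V(s,t)) <= Z(s,t), a
   nonnegative supremum of s(X_t - gamma) - V(s,t) + g(s) forces
   sup_{t>0} Z(s,t) >= exp(gamma s - g(s)), and since E[Z(s,0)] <= 1 this has
   probability at most exp(g(s) - gamma s).  Ville's inequality is proved on a
   finite increasing grid by splitting on whether Z already reaches the level at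
   the first grid time, transported to the union of the dyadic grids by
   continuity of the measure, and to all t > 0 by right-continuity of the
   paths. *)

Section DyadicGrid.
Context (R : realType).

Definition dyadic_grid (N : nat) : seq R :=
  [seq k%:R / (2 ^ N)%:R | k <- iota 1 (N * 2 ^ N)].

Lemma dyadic_grid_sorted N : path <=%R 0 (dyadic_grid N : seq R).
Proof.
pose f k : R := k%:R / (2 ^ N)%:R.
have -> : 0 = f 0%N by rewrite /f mul0r.
rewrite /dyadic_grid path_map.
apply: (@sub_path _ ltn); last exact: (iota_ltn_sorted 0 (N * 2 ^ N).+1).
move=> i j /ltnW ij /=; apply: ler_wpM2r; by rewrite ?invr_ge0 ?ler_nat.
Qed.

Lemma dyadic_grid_subset N M : (N <= M)%N -> {subset (dyadic_grid N : seq R) <= dyadic_grid M}.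
Proof.
move=> NM t /mapP[k]; rewrite mem_iota add1n ltnS => /andP[k_gt0 kN] ->.
have eM : (2 ^ M = 2 ^ N * 2 ^ (M - N))%N by rewrite -expnD subnKC.
apply/mapP; exists (k * 2 ^ (M - N))%N.
  rewrite mem_iota muln_gt0 k_gt0 expn_gt0 /= add1n ltnS eM mulnA leq_mul2r.
  by rewrite (leq_trans kN) ?leq_mul2r ?NM ?orbT.
by rewrite natrM eM natrM invfM mulrACA divff ?mulr1.
Qed.

Lemma dyadic_grid_dense t e : 0 < t -> 0 < e ->
  exists N, exists2 u, u \in dyadic_grid N & t < u < t + e.
Proof.
move=> t_gt0 e_gt0.
pose N := (Num.truncn t + Num.truncn e^-1 + 2)%N.
have tN : t + 1 < N%:R.
  have := truncnS_gt t; rewrite /N !natrD -addn1 natrD.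
  by move: (ler0n R (Num.truncn e^-1)); lra.
have p_gt0 : (0 : R) < (2 ^ N)%:R by rewrite ltr0n expn_gt0.
have p_ge1 : (1 : R) <= (2 ^ N)%:R by rewrite ler1n expn_gt0.
have eN : e^-1 < (2 ^ N)%:R.
  apply: (lt_le_trans (truncnS_gt _)); rewrite ler_nat.
  by apply: leq_trans (ltnW (ltn_expl N (ltnSn 1))); rewrite /N addn2 ltnS leqW // leq_addl.
pose k := (Num.truncn (t * (2 ^ N)%:R)).+1.
have k_gt : t * (2 ^ N)%:R < k%:R by exact: truncnS_gt.
have k_le : k%:R <= t * (2 ^ N)%:R + 1.
  by rewrite /k -addn1 natrD lerD2r truncn_le mulr_ge0 // ltW.
exists N, (k%:R / (2 ^ N)%:R).
  apply/mapP; exists k => //; rewrite mem_iota /k ltn0Sn add1n -/k ltnS -(ler_nat R) natrM.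
  apply: (le_trans k_le); rewrite ltW // (le_lt_trans (_ : _ <= (t + 1) * (2 ^ N)%:R)) //.
    by rewrite mulrDl mul1r lerD2l.
  by rewrite ltr_pM2r.
rewrite ltr_pdivlMr // k_gt ltr_pdivrMr // mulrDl (le_lt_trans k_le) // ltrD2l.
by rewrite -ltr_pdivrMl // mulr1.
Qed.

Lemma right_cvg_gt (f : R -> R) t a : f u @[u --> t^'+] --> f t -> a < f t ->
  exists2 e : R, 0 < e & forall u, t < u < t + e -> a < f u.
Proof.
move=> ft a_lt; have [e /= e_gt0 He] := (nbhs_ballP _ _).1 (cvgr_gt _ ft _ a_lt).
exists e => // u /andP[tu ue]; apply: He => //=.
by rewrite -ball_normE /= ltr_norml; apply/andP; split; lra.
Qed.

Lemma right_cvg_dyadic_gt (f : R -> R) t a : f u @[u --> t^'+] --> f t ->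
  0 < t -> a < f t -> exists N, exists2 u, u \in dyadic_grid N & a < f u.
Proof.
move=> ft t_gt0 /(right_cvg_gt ft)[e e_gt0 He].
by have [N [u uN /He]] := dyadic_grid_dense t_gt0 e_gt0; exists N, u.
Qed.

End DyadicGrid.
Arguments dyadic_grid {R}.
Arguments dyadic_grid_sorted {R}.

Section Ville.
Context (d : measure_display) (T : measurableType d) (R : realType).
Variables (P : probability T R) (F : R -> set (set T)) (Z : R -> T -> R).
Hypothesis F_measurable : forall t : R, 0 <= t -> F t `<=` measurable.
Hypothesis F_setI : forall t A B, F t A -> F t B -> F t (A `&` B).
Hypothesis F_nondecreasing : forall u t : R, 0 <= u -> u <= t -> F u `<=` F t.
Hypothesis Z_adapted : adapted F Z.
Hypothesis Z_supermartingale : forall u t : R, 0 <= u -> u <= t -> forall A, F u A ->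
  (\int[P]_(x in A) (Z t x)%:E <= \int[P]_(x in A) (Z u x)%:E)%E.
Hypothesis Z_ge0 : {ae P, forall x (t : R), 0 <= t -> 0 <= Z t x}.

Lemma measurable_Z (t : R) : 0 <= t -> measurable_fun setT (Z t).
Proof. by move=> t_ge0 _ B mB; rewrite setTI; exact: F_measurable (Z_adapted t_ge0 mB). Qed.

Lemma measurable_EFin_Z (t : R) A : 0 <= t -> measurable_fun A (@EFin R \o Z t).
Proof. by move=> t_ge0; apply/measurable_EFinP/(measurable_funS _ _ (measurable_Z t_ge0)). Qed.

Lemma integral_Z_ge0 (t : R) A : 0 <= t -> measurable A ->
  (0 <= \int[P]_(x in A) (Z t x)%:E)%E.
Proof.
move=> t_ge0 mA.
rewrite (ae_eq_integral (fun x => (Num.max (Z t x) 0)%:E)) //.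
- by apply: integral_ge0 => x _; rewrite lee_fin le_max lexx orbT.
- exact: measurable_EFin_Z.
- apply/measurable_EFinP/measurable_maxr; last exact: measurable_cst.
  exact: measurable_funS (measurable_Z t_ge0).
- by apply: filterS Z_ge0 => x /(_ t t_ge0) Zt_ge0 _; rewrite /= (max_idPl Zt_ge0).
Qed.

Lemma level_integral_ge c (t : R) A : 0 <= c -> 0 <= t -> measurable A ->
  (forall x, A x -> c <= Z t x) -> (c%:E * P A <= \int[P]_(x in A) (Z t x)%:E)%E.
Proof.
move=> c_ge0 t_ge0 mA AZ; rewrite -integral_cst //.
by apply: ge0_le_integral => //; exact: measurable_EFin_Z.
Qed.

Definition hit (c : R) (us : seq R) : set T := [set x | has (fun t => c <= Z t x) us].

Lemma hit_nil c : hit c [::] = set0.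
Proof. by apply/seteqP; split => x. Qed.

Lemma hit_cons c (u : R) us : hit c (u :: us) = Z u @^-1` `[c, +oo[ `|` hit c us.
Proof. by apply/seteqP; split => x; rewrite /hit /= in_itv /= andbT => /orP. Qed.

Lemma measurable_hit c (u0 : R) us : 0 <= u0 -> path <=%R u0 us -> measurable (hit c us).
Proof.
elim: us u0 => [|u us IH] u0 u0_ge0 /=; first by rewrite hit_nil.
move=> /andP[u0u us_sorted]; have u_ge0 := le_trans u0_ge0 u0u.
rewrite hit_cons; apply: measurableU; last exact: IH us_sorted.
exact: F_measurable (Z_adapted u_ge0 (measurable_itv _)).
Qed.

Lemma maximal_inequality c (u0 : R) us B : 0 < c -> 0 <= u0 -> path <=%R u0 us ->
  F u0 B -> (c%:E * P (B `&` hit c us) <= \int[P]_(x in B) (Z u0 x)%:E)%E.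
Proof.
move=> c_gt0; elim: us u0 B => [|u us IH] u0 B u0_ge0 /=.
  move=> _ FB; rewrite hit_nil setI0 measure0 mule0.
  exact: integral_Z_ge0 (F_measurable u0_ge0 FB).
move=> /andP[u0u us_sorted] FB; have u_ge0 := le_trans u0_ge0 u0u.
have FuB := F_nondecreasing u0_ge0 u0u FB.
set B1 := B `&` Z u @^-1` `[c, +oo[; set B2 := B `&` Z u @^-1` `]-oo, c[.
have FB1 : F u B1 by apply: F_setI FuB (Z_adapted u_ge0 (measurable_itv _)).
have FB2 : F u B2 by apply: F_setI FuB (Z_adapted u_ge0 (measurable_itv _)).
have [mB1 mB2] := (F_measurable u_ge0 FB1, F_measurable u_ge0 FB2).
have B12_disj : B1 `&` B2 = set0.
  apply/seteqP; split => x // [[_ /= x1] [_ /= x2]]; move: x1 x2.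
  by rewrite !in_itv /= andbT => /le_lt_trans/[apply]; rewrite ltxx.
have B_split : B = B1 `|` B2.
  apply/seteqP; split => [x Bx|x [] []//].
  by rewrite /B1 /B2 /= !in_itv /= andbT; case: (leP c (Z u x)); [left|right].
have hit_split : B `&` hit c (u :: us) = B1 `|` (B2 `&` hit c us).
  rewrite hit_cons setIUr /B1 /B2; apply/seteqP; split => x /=; rewrite !in_itv /= andbT.
    case=> [[Bx cZ]|[Bx Hx]]; first by left.
    by case: (leP c (Z u x)) => cZ; [left|right].
  by case=> [[Bx cZ]|[[Bx _] Hx]]; [left|right].
have mB2H : measurable (B2 `&` hit c us).
  exact: measurableI mB2 (measurable_hit c u_ge0 us_sorted).
rewrite hit_split measureU //; last by rewrite setIA B12_disj set0I.
apply: le_trans (Z_supermartingale u0_ge0 u0u FB).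
rewrite ge0_muleDr // B_split integral_setU //; last 2 first.
- exact: measurable_EFin_Z.
- by apply/disj_setPS; rewrite B12_disj.
apply: leeD; last exact: IH.
apply: level_integral_ge => //; first exact: ltW.
by move=> x [_]; rewrite /= in_itv /= andbT.
Qed.

Hypothesis F0_setT : F 0 setT.
Hypothesis Z0_integral_le1 : (\int[P]_x (Z 0 x)%:E <= 1)%E.
Hypothesis Z_right_continuous : right_continuous_paths Z.

Lemma dyadic_hit_le (c : R) N : 0 < c -> (P (hit c (dyadic_grid N)) <= (c^-1)%:E)%E.
Proof.
move=> c_gt0; rewrite -[leRHS]mule1 lee_pdivlMl //.
have := maximal_inequality c_gt0 (lexx 0) (dyadic_grid_sorted N) F0_setT.
by rewrite setTI => /le_trans; apply.
Qed.

(* The event is the intersection over the levels [a m = (c^-1 + 1/(m+1))^-1]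
   increasing to [c]; by right-continuity each crossing of [a m] is already
   seen on some dyadic grid. *)
Lemma ville_inequality (c : R) : 0 < c ->
  prob_le P [set x | forall a, 0 < a -> a < c -> exists2 t, 0 < t & a < Z t x] c^-1.
Proof.
move=> c_gt0; have cV_gt0 : 0 < c^-1 by rewrite invr_gt0.
pose a m := (c^-1 + harmonic m)^-1.
have a_gt0 m : 0 < a m by rewrite invr_gt0 addr_gt0 ?harmonic_gt0.
have a_lt_c m : a m < c.
  rewrite -[ltRHS]invrK ltf_pV2 ?posrE ?addr_gt0 ?harmonic_gt0 //.
  by rewrite -ltrBlDl subrr harmonic_gt0.
have mhit m N : measurable (hit (a m) (dyadic_grid N)).
  exact: measurable_hit (lexx 0) (dyadic_grid_sorted N).
pose U m := \bigcup_N hit (a m) (dyadic_grid N).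
have mU m : measurable (U m) by exact: bigcupT_measurable.
have PU m : (P (U m) <= (c^-1 + harmonic m)%:E)%E.
  have hit_nd : nondecreasing_seq (fun N => hit (a m) (dyadic_grid N)).
    move=> N M NM; apply/subsetPset => x /hasP[u uN au].
    by apply/hasP; exists u => //; exact: dyadic_grid_subset uN.
  apply: cvge_le (nondecreasing_cvg_mu (mhit m) (mU m) hit_nd).
  by apply: nearW => N; have := dyadic_hit_le N (a_gt0 m); rewrite invrK.
exists (\bigcap_m U m); split; first exact: bigcapT_measurable.
split.
  move=> x hx m _; have [t t_gt0 aZ] := hx _ (a_gt0 m) (a_lt_c m).
  have [N [u uN au]] := right_cvg_dyadic_gt (@Z_right_continuous x t (ltW t_gt0)) t_gt0 aZ.
  by exists N => //; apply/hasP; exists u => //; exact: ltW.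
have PUm m : (P (\bigcap_m U m) <= (c^-1 + harmonic m)%:E)%E.
  apply: le_trans (PU m); apply: le_measure; rewrite ?inE //; first exact: bigcapT_measurable.
  exact: bigcap_inf.
have b_cvg : (fun m => (c^-1 + harmonic m)%:E) @ \oo --> (c^-1)%:E.
  rewrite -[X in _ --> X]adde0; exact: cvgeD (cvg_cst _) cvge_harmonic.
by apply: (cvge_ge _ b_cvg); exact: nearW.
Qed.

End Ville.

Section OuterProbability.
Context (d : measure_display) (T : measurableType d) (R : realType).

Lemma prob_le_ae_sub (P : probability T R) (E E' : set T) b :
  {ae P, forall x, E x -> E' x} -> prob_le P E' b -> prob_le P E b.
Proof.
case=> N [mN PN0 EN] [M [mM [E'M PM]]].
exists (N `|` M); split; first exact: measurableU.
split.
  move=> x Ex; have [Nx|nNx] := pselect (N x); [by left|right].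
  apply: E'M; apply: contrapT => nE'x; apply: nNx; apply: EN => /(_ Ex).
  exact: nE'x.
have PN_le0 : (P N <= 0)%E by rewrite le_eqVlt; apply/orP; left; apply/eqP.
by apply: le_trans (measureU2 P mN mM) _; rewrite -[leRHS]add0e leeD.
Qed.

Lemma sup_event_level (f Y : R -> T -> R) c x : 0 < c -> sup_event f x ->
  (forall t, 0 < t -> c * expR (f t x) <= Y t x) ->
  forall a, 0 < a -> a < c -> exists2 t, 0 < t & a < Y t x.
Proof.
move=> c_gt0 f_sup fY a a_gt0 a_lt_c; apply: contrapT => no_t.
have f_le t : 0 < t -> f t x <= ln (c^-1 * a).
  move=> t_gt0; rewrite -[f t x]expRK ler_ln ?posrE ?expR_gt0 ?mulr_gt0 ?invr_gt0 //.
  rewrite ler_pdivlMl // (le_trans (fY t t_gt0)) // leNgt; apply/negP => aY.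
  by apply: no_t; exists t.
have : (0 <= (ln (c^-1 * a))%:E)%E.
  by apply: le_trans f_sup _; apply: ge_ereal_sup => _ [t t_gt0 <-]; rewrite lee_fin f_le.
by rewrite lee_fin leNgt ln_lt0 // mulr_gt0 ?invr_gt0 //= ltr_pdivrMl // mulr1.
Qed.

End OuterProbability.

Section NaturalFiltration.
Context (d : measure_display) (T : measurableType d) (R : realType).
Variables Y X : R -> T -> R.

Lemma natural_filtration_measurable (t : R) :
  (forall u : R, 0 <= u -> measurable_fun setT (Y u)) ->
  (forall u : R, 0 <= u -> measurable_fun setT (X u)) ->
  natural_filtration Y X t `<=` measurable.
Proof.
move=> Y_meas X_meas; apply: smallest_sub; first exact: sigma_algebra_measurable.
move=> _ [u [/andP[u_ge0 _] [B [mB [->|->]]]]].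
  by have := Y_meas u u_ge0 measurableT _ mB; rewrite setTI.
by have := X_meas u u_ge0 measurableT _ mB; rewrite setTI.
Qed.

Lemma natural_filtration_setI (t : R) A B : natural_filtration Y X t A ->
  natural_filtration Y X t B -> natural_filtration Y X t (A `&` B).
Proof. exact: (@measurableI _ (g_sigma_algebraType _)). Qed.

Lemma natural_filtration_setT (t : R) : natural_filtration Y X t setT.
Proof. exact: (@measurableT _ (g_sigma_algebraType _)). Qed.

Lemma natural_filtration_nondecreasing (u t : R) : u <= t ->
  natural_filtration Y X u `<=` natural_filtration Y X t.
Proof.
move=> ut; apply: sub_sigma_algebra2 => A [w [/andP[w_ge0 wu] genA]].
by exists w; rewrite w_ge0 (le_trans wu ut).
Qed.

End NaturalFiltration.

Lemma prob_sup_event_le (d : measure_display) (T : measurableType d) (R : realType)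
    (P : probability T R) (V X Z : R -> T -> R) (s gamma b : R) :
  (forall t : R, 0 <= t -> measurable_fun setT (V t)) ->
  (forall t : R, 0 <= t -> measurable_fun setT (X t)) ->
  right_continuous_paths Z -> supermartingale P (natural_filtration V X) Z ->
  (\int[P]_x (Z 0 x)%:E <= 1)%E ->
  {ae P, forall x (t : R), 0 <= t -> expR (s * X t x - V t x) <= Z t x} ->
  prob_le P (sup_event (fun t x => s * (X t x - gamma) - V t x + b))
    (expR (b - gamma * s)).
Proof.
move=> V_meas X_meas Z_rc [Z_adapted [_ Z_super]] Z0_le1 Z_dom.
have Z_ge0 : {ae P, forall x (t : R), 0 <= t -> 0 <= Z t x}.
  by apply: filterS Z_dom => x Zx t t_ge0; exact: le_trans (ltW (expR_gt0 _)) (Zx t t_ge0).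
have F_meas (t : R) (_ : 0 <= t) := @natural_filtration_measurable _ _ _ V X t V_meas X_meas.
have F_nd (u t : R) (_ : 0 <= u) := @natural_filtration_nondecreasing _ _ _ V X u t.
have := ville_inequality F_meas (natural_filtration_setI (Y := V) (X := X)) F_nd Z_adapted
  Z_super Z_ge0 (@natural_filtration_setT _ _ _ V X 0) Z0_le1 Z_rc (expR_gt0 (gamma * s - b)).
rewrite -expRN opprB; apply: prob_le_ae_sub.
apply: filterS Z_dom => x Zx Ex; apply: sup_event_level (expR_gt0 _) Ex _ => t t_gt0.
have -> : expR (gamma * s - b) * expR (s * (X t x - gamma) - V t x + b) =
          expR (s * X t x - V t x).
  by rewrite -expRD; congr expR; ring.
by apply: Zx; rewrite ltW.
Qed.

Unset Implicit Arguments.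

Theorem theorem10 (d : measure_display) (T : measurableType d) (R : realType)
  (P : probability T R) (S : set R)
  (V : R -> R -> T -> R) (X : R -> T -> R) (Z : R -> R -> T -> R) :
  (* V(s,.) and X are real-valued stochastic processes *)
  (forall s, S s -> forall t, 0 <= t -> measurable_fun setT (V s t)) ->
  (forall t, 0 <= t -> measurable_fun setT (X t)) ->
  (forall x, X 0 x = 0) ->
  (* Z(s,.) is a right-continuous supermartingale w.r.t. the natural
     filtration of V(s,.) and X *)
  (forall s, S s -> right_continuous_paths (Z s) /\
     supermartingale P (natural_filtration (V s) X) (Z s)) ->
  (forall s, S s -> (\int[P]_x (Z s 0 x)%:E <= 1)%E) ->
  (forall s, S s -> {ae P, forall x, forall t, 0 <= t ->
       expR (s * X t x - V s t x) <= Z s t x}) ->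
  forall (gamma : R) (g : R -> R),
  (* main bound *)
  (forall s, S s ->
     prob_le P (sup_event (fun t x => s * (X t x - gamma) - V s t x + g s))
       (expR (g s - gamma * s))) /\
  (* (I) *)
  (forall zeta, S zeta ->
     (forall s, S s -> g zeta - gamma * zeta <= g s - gamma * s) ->
     prob_le P
       (sup_event (fun t x => zeta * (X t x - gamma) - V zeta t x + g zeta))
       (expR (g zeta - gamma * zeta))) /\
  (* (II) *)
  (forall v : R -> R -> R, (forall s t x, V s t x = v s t) ->
     forall s, S s -> forall tau, 0 <= tau ->
     prob_le P
       (sup_event (fun t x => s * (X t x - gamma) - V s t x + V s tau x))
       (expR (v s tau - gamma * s))) /\
  (* (III) *)
  (forall (C : R) (phi : R -> R) (Vp : R -> T -> R), 0 < C ->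
     (forall s t x, V s t x = phi s * Vp t x + ln C) ->
     forall s, S s -> forall m : R,
     prob_le P
       (sup_event (fun t x => s * (X t x - gamma) - phi s * (Vp t x - m)))
       (C * expR (m * phi s - gamma * s))).

Proof.
move=> V_meas X_meas _ Z_super Z0_le1 Z_dom gamma g.
have bound s (sS : S s) b := prob_sup_event_le gamma b (V_meas s sS) X_meas
  (Z_super s sS).1 (Z_super s sS).2 (Z0_le1 s sS) (Z_dom s sS).
split; [|split; [|split]].
- by move=> s sS; exact: bound.
- by move=> zeta zS _; exact: bound.
- move=> v V_det s sS tau _.
  have -> : (fun t x => s * (X t x - gamma) - V s t x + V s tau x) =
            (fun t x => s * (X t x - gamma) - V s t x + v s tau).
    by apply: funext => t; apply: funext => x; rewrite (V_det s tau x).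
  exact: bound.
- move=> C phi Vp C_gt0 V_affine s sS m.
  have -> : (fun t x => s * (X t x - gamma) - phi s * (Vp t x - m)) =
            (fun t x => s * (X t x - gamma) - V s t x + (ln C + m * phi s)).
    by apply: funext => t; apply: funext => x; rewrite V_affine; ring.
  have -> : C * expR (m * phi s - gamma * s) = expR (ln C + m * phi s - gamma * s).
    by rewrite -addrA [in RHS]expRD lnK // posrE.
  exact: bound.
Qed.
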